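(* Let $K\ge 1$ and $M\ge 2$ be integers, and let $p>0$, $\beta_k>0$, $\alpha>0$, $p_{ce}>0$, $\delta_k>0$, $\sigma^2>0$ be real numbers and $\zeta_k\in(0,1]$. Let $h$ be a circularly-symmetric complex Gaussian random variable, $h\sim\mathcal{CN}(0,\beta_k)$ (so $|h|^2$ is exponentially distributed with mean $\beta_k$), and define $$\phi=\mathbb{E}\left\{\frac{1}{\frac{\beta_k |h|^2 \alpha p_{ce}\delta_k}{K\sigma^2}+1}\right\},\qquad P_{Ik}=p\,\beta_k\left[\zeta_k\left(M-(M-1)\phi-1\right)+1\right].$$ Define $$\mathcal{L}_1(\alpha,p_{ce})=1-\frac{K\sigma^2}{\beta_k^2\alpha p_{ce}\delta_k}\ln\!\left(1+\frac{\beta_k^2\alpha p_{ce}\delta_k}{K\sigma^2}\right),\qquad \mathcal{L}_2(\alpha,p_{ce})=1-\frac{K\sigma^2}{2\beta_k^2\alpha p_{ce}\delta_k}\ln\!\left(1+\frac{2\beta_k^2\alpha p_{ce}\delta_k}{K\sigma^2}\right).$$ Then $$P_{Ik}^{L}:=p\beta_k\left[\zeta_k(M-1)\mathcal{L}_1(\alpha,p_{ce})+1\right] \;<\; P_{Ik} \;<\; p\beta_k\left[\zeta_k(M-1)\mathcal{L}_2(\alpha,p_{ce})+1\right]=:P_{Ik}^{U}.$$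
   Context: Setting: a reader with $M$ transmit antennas powers $K$ single-antenna backscatter tags. $P_{Ik}$ is the incident signal power at tag $k$ when the reader transmits a signal of power $p$ with energy beamformer $\sum_{j}\sqrt{\zeta_j}\,\hat{\mathbf h}_{jr}^*/\|\hat{\mathbf h}_{jr}\|$ built from least-squares estimates of the backscatter channel; $\beta_k$ is the path loss to tag $k$, $\zeta_k$ the energy-allocation weight of tag $k$, $\alpha$ the channel-estimation duration (in symbol periods), $p_{ce}$ the per-antenna pilot power, $\delta_k$ the reflection coefficient of tag $k$, $\sigma^2$ the noise power, and $h$ models the unknown tag-to-reader (backward) channel coefficient. The closed form of $P_{Ik}$ displayed in the claim (expectation over the unknown backward channel) is taken as its definition. *)

From HB Require Import structures.
From mathcomp Require Import all_boot all_order all_algebra.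
From mathcomp Require Import all_classical all_reals all_analysis.
From mathcomp Require Import exponential_distribution.
Set Implicit Arguments. Unset Strict Implicit. Unset Printing Implicit Defensive.
Import Order.TTheory GRing.Theory Num.Theory.
Local Open Scope classical_set_scope.
Local Open Scope ring_scope.

(* phi = E[ 1 / (beta |h|^2 alpha pce delta / (K sigma2) + 1) ], where
   X = |h|^2 ~ Exp(mean beta), i.e. rate beta^-1, density exponential_pdf. *)
Definition phi {R : realType} (K : nat) (beta alpha pce delta sigma2 : R) : R :=
  Rintegral lebesgue_measure [set: R]
    (fun x => exponential_pdf (beta^-1) x *
              (beta * x * alpha * pce * delta / (K%:R * sigma2) + 1)^-1).

Definition P_Ik {R : realType} (K M : nat) (p beta alpha pce delta sigma2 zeta : R) : R :=
  p * beta * (zeta * (M%:R - (M%:R - 1) * phi K beta alpha pce delta sigma2 - 1) + 1).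

Definition L1 {R : realType} (K : nat) (beta alpha pce delta sigma2 : R) : R :=
  1 - K%:R * sigma2 / (beta ^+ 2 * alpha * pce * delta)
      * ln (1 + beta ^+ 2 * alpha * pce * delta / (K%:R * sigma2)).

Definition L2 {R : realType} (K : nat) (beta alpha pce delta sigma2 : R) : R :=
  1 - K%:R * sigma2 / (2 * beta ^+ 2 * alpha * pce * delta)
      * ln (1 + 2 * beta ^+ 2 * alpha * pce * delta / (K%:R * sigma2)).

(* Write lam = 1/beta and c = beta alpha pce delta / (K sigma2), so that phi is
   the integral of lam e^(-lam y) / (1 + c y) over [0, +oo[, and put s = c / lam;
   the claim is ln(1 + 2s) / (2s) < phi < ln(1 + s) / s.  (Probabilistically:
   the exponential law of mean 1 dominates the uniform law on [0, 1]
   stochastically and the uniform law on [0, 2] in the convex order.)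
   For each bound the integral is split at b = 1/lam (resp. b = 2/lam), and on
   each piece the integrand is compared with the derivative of an explicit
   primitive: on [0, b] through e^(-t) >= 1 - t (resp. e^(-t) >= (1 - t/2)^2
   for t <= 2), on [b, +oo[ through 0 < 1/(1 + c y) <= 1.  The boundary terms
   add up to ln(1 + s) / s minus (resp. ln(1 + 2s) / (2s) plus) a positive
   multiple of e^(-lam b), which makes both inequalities strict. *)

From HB Require Import structures.
From mathcomp Require Import all_boot all_order all_algebra.
From mathcomp Require Import all_classical all_reals all_analysis.
From mathcomp Require Import exponential_distribution measurable_realfun.
From mathcomp Require Import ring lra.
Import Order.TTheory GRing.Theory Num.Theory.
Import numFieldTopology.Exports.
Local Open Scope classical_set_scope.
Local Open Scope ring_scope.

Section RealIntegrals.
Context {R : realType}.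
Local Notation mu := (@lebesgue_measure R).
Implicit Types (f g F : R -> R) (a b l x : R).

Lemma ge0_in_itv_cc {b} {P : R -> Prop} :
  (forall x, 0 <= x -> P x) -> {in `[0, b], forall x, P x}.
Proof. by move=> P0 x; rewrite in_itv /= => /andP[/P0]. Qed.

Lemma ge0_in_itv_cy {b} {P : R -> Prop} : 0 <= b ->
  (forall x, 0 <= x -> P x) -> {in `[b, +oo[, forall x, P x}.
Proof. by move=> b0 P0 x; rewrite in_itv /= andbT => /(le_trans b0)/P0. Qed.

Lemma integral_itv_cc_primitive {F f a b} : a < b ->
  {in `[a, b], forall x, is_derive x 1 F (f x)} ->
  {within `[a, b]%classic, continuous f} ->
  (\int[mu]_(x in `[a, b]) (f x)%:E = (F b - F a)%:E)%E.
Proof.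
move=> ab dF cf; rewrite EFinB; apply: continuous_FTC2 => //.
- have dFab : {in `[a, b], forall x, derivable F x 1} by move=> x /dF [].
  split; first by move=> x /subset_itv_oo_cc /dFab.
  + apply/cvg_at_right_filter/differentiable_continuous/derivable1_diffP/dFab.
    by rewrite in_itv /= lexx ltW.
  + apply/cvg_at_left_filter/differentiable_continuous/derivable1_diffP/dFab.
    by rewrite in_itv /= lexx ltW.
- by move=> x /subset_itv_oo_cc /dF dFx; rewrite derive1E derive_val.
Qed.

Lemma integral_itv_cy_primitive {F f a l} :
  {in `[a, +oo[, forall x, is_derive x 1 F (f x)} ->
  {within `[a, +oo[%classic, continuous f} -> {in `[a, +oo[, forall x, 0 <= f x} ->
  F x @[x --> +oo] --> l ->
  (\int[mu]_(x in `[a, +oo[) (f x)%:E = (l - F a)%:E)%E.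
Proof.
move=> dF cf f0 Fl; rewrite EFinB.
have in_cy x : a < x -> x \in `[a, +oo[ by rewrite in_itv /= andbT => /ltW.
apply: ge0_continuous_FTC2y => //.
- by move=> x ax; apply: f0; rewrite in_itv /= ax.
- by move=> x /in_cy /dF [].
- have /dF[dFa _] : a \in `[a, +oo[ by rewrite in_itv /= lexx.
  exact/cvg_at_right_filter/differentiable_continuous/derivable1_diffP.
- by move=> x; rewrite in_itv /= andbT => /in_cy /dF dFx; rewrite derive1E derive_val.
Qed.

Lemma le_integral_itv_cc f g a b :
  {within `[a, b]%classic, continuous f} -> {within `[a, b]%classic, continuous g} ->
  {in `[a, b], forall x, f x <= g x} ->
  (\int[mu]_(x in `[a, b]) (f x)%:E <= \int[mu]_(x in `[a, b]) (g x)%:E)%E.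
Proof.
move=> cf cg fg; apply: le_integral => //.
- by apply: continuous_compact_integrable => //; exact: segment_compact.
- by apply: continuous_compact_integrable => //; exact: segment_compact.
- by move=> x; rewrite inE lee_fin => /fg.
Qed.

Lemma measurable_fun_itv_cy f a : {within `[a, +oo[%classic, continuous f} ->
  measurable_fun `[a, +oo[ (fun x : R => (f x)%:E).
Proof. by move=> cf; apply/measurable_EFinP; exact: subspace_continuous_measurable_fun. Qed.

Lemma le_integral_itv_cy f g a :
  {within `[a, +oo[%classic, continuous f} -> {within `[a, +oo[%classic, continuous g} ->
  {in `[a, +oo[, forall x, 0 <= f x <= g x} ->
  (\int[mu]_(x in `[a, +oo[) (f x)%:E <= \int[mu]_(x in `[a, +oo[) (g x)%:E)%E.
Proof.
move=> cf cg fg; apply: ge0_le_integral => //; try exact: measurable_fun_itv_cy.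
- by move=> x /fg /andP[f0 _]; rewrite lee_fin.
- by move=> x /fg /andP[_]; rewrite lee_fin.
Qed.

Lemma integral_itv_cy_split {f a b} : a <= b ->
  {within `[a, +oo[%classic, continuous f} -> {in `[a, +oo[, forall x, 0 <= f x} ->
  (\int[mu]_(x in `[a, +oo[) (f x)%:E =
   \int[mu]_(x in `[a, b]) (f x)%:E + \int[mu]_(x in `[b, +oo[) (f x)%:E)%E.
Proof.
move=> ab cf f0.
have mf := measurable_fun_itv_cy _ _ cf.
rewrite (@itv_bndbnd_setU _ _ (BLeft a) (BRight b) (BInfty _ false)) //.
rewrite ge0_integral_setU //=.
- rewrite integral_itv_obnd_cbnd //.
  by apply: measurable_funS mf => //; apply: subset_itvr; rewrite bnd_simp.
- by rewrite -itv_bndbnd_setU.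
- move=> x; rewrite !in_itv /= => -[/andP[ax _]|/andP[bx _]];
    rewrite lee_fin f0 // in_itv /= andbT //.
  exact: le_trans ab (ltW bx).
- apply/disj_setPS => y [/=]; rewrite 2!in_itv/= => /andP[_ yb] /andP[].
  by rewrite ltNge yb.
Qed.

Lemma cvg_expRN_mul_bounded (lam B : R) (P : R -> R) : 0 < lam ->
  (forall y, 0 <= y -> `|P y| <= B) ->
  expR (- (lam * y)) * P y @[y --> +oo] --> 0.
Proof.
move=> lam0 PB.
have e0 : expR (- (lam * y)) @[y --> +oo] --> 0.
  apply: (@cvg_comp _ _ _ (fun y => lam * y) (fun z => expR (- z)) _ (pinfty_nbhs R)).
    exact: gt0_cvgMry.
  exact: cvgr_expR.
have up : B * expR (- (lam * y)) @[y --> +oo] --> 0.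
  by rewrite -(mulr0 B); apply: cvgM => //; exact: cvg_cst.
have low : - (B * expR (- (lam * y))) @[y --> +oo] --> 0.
  by rewrite -oppr0; exact: cvgN.
apply: (squeeze_cvgr _ low up); near=> y.
have /PB : 0 <= y by near: y; exact: nbhs_pinfty_ge.
rewrite ler_norml => /andP[PBl PBr].
have ey := expR_gt0 (- (lam * y)).
apply/andP; split; nra.
Unshelve. all: by end_near. Qed.

End RealIntegrals.

Section ExpHyperbola.
Context {R : realType} (lam c : R).
Hypotheses (lam_gt0 : 0 < lam) (c_gt0 : 0 < c).
Local Notation mu := (@lebesgue_measure R).
Implicit Types x y : R.

Definition decay y := expR (- (lam * y)).
Definition hyper y := (1 + c * y)^-1.
Definition integrand y := lam * decay y * hyper y.

Lemma decay0 : decay 0 = 1.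
Proof. by rewrite /decay mulr0 oppr0 expR0. Qed.

Lemma decay_gt0 y : 0 < decay y.
Proof. exact: expR_gt0. Qed.

Lemma hyper0 : hyper 0 = 1.
Proof. by rewrite /hyper mulr0 addr0 invr1. Qed.

Lemma hyper_den_gt0 y : 0 <= y -> 0 < 1 + c * y.
Proof. by move=> y0; rewrite ltr_pwDl // mulr_ge0 // ltW. Qed.

Lemma hyper_gt0 y : 0 <= y -> 0 < hyper y.
Proof. by move=> /hyper_den_gt0; rewrite invr_gt0. Qed.

Lemma hyper_le1 y : 0 <= y -> hyper y <= 1.
Proof.
move=> y0; rewrite invf_le1 ?hyper_den_gt0 //.
by rewrite lerDl mulr_ge0 // ltW.
Qed.

Lemma is_derive_decay x : is_derive x 1 decay (- lam * decay x).
Proof. by apply: is_derive_eq; rewrite /GRing.scale /= /decay; ring. Qed.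

Lemma is_derive_hyper x : 0 <= x -> is_derive x 1 hyper (- c * hyper x ^+ 2).
Proof.
move=> x0; have den0 := lt0r_neq0 (hyper_den_gt0 _ x0).
apply: is_derive_eq (is_deriveV (f := fun y => 1 + c * y) den0 _) _.
by rewrite /GRing.scale /= /hyper; field.
Qed.

Lemma is_derive_ln_den x : 0 <= x ->
  is_derive x 1 (fun y => ln (1 + c * y)) (c * hyper x).
Proof.
move=> x0; have lnx := is_derive1_ln (hyper_den_gt0 _ x0).
apply: is_derive_eq (is_derive1_comp (g := fun y => 1 + c * y) lnx _) _.
by rewrite /GRing.scale /= /hyper; field; exact: lt0r_neq0 (hyper_den_gt0 _ x0).
Qed.

Lemma integrand_ge0 y : 0 <= y -> 0 <= integrand y.
Proof.
by move=> y0; rewrite !mulr_ge0 ?(ltW (decay_gt0 _)) ?(ltW (hyper_gt0 _ y0)) ?ltW.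
Qed.

Lemma derivable_integrand x : 0 <= x -> derivable integrand x 1.
Proof.
(* Typeclass resolution of [is_derive] in [ex_derive] picks up [dE] and [dG]. *)
move=> x0; have dE := is_derive_decay x; have dG := is_derive_hyper _ x0.
by rewrite /integrand; apply: ex_derive.
Qed.

Definition ub_head y :=
  - (decay y * hyper y) + (1 + lam / c) * hyper y + lam / c * ln (1 + c * y).
Definition ub_head' y :=
  integrand y + c * hyper y ^+ 2 * (decay y - (1 - lam * y)).

Lemma is_derive_ub_head x : 0 <= x -> is_derive x 1 ub_head (ub_head' x).
Proof.
move=> x0; have dE := is_derive_decay x; have dG := is_derive_hyper _ x0.
have dL := is_derive_ln_den _ x0.
rewrite /ub_head; apply: is_derive_eq; rewrite /GRing.scale /= /ub_head' /integrand /hyper.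
by field; rewrite lt0r_neq0 ?hyper_den_gt0 // lt0r_neq0.
Qed.

Lemma derivable_ub_head' x : 0 <= x -> derivable ub_head' x 1.
Proof.
move=> x0; have dE := is_derive_decay x; have dG := is_derive_hyper _ x0.
by rewrite /ub_head' /integrand; apply: ex_derive.
Qed.

Lemma integrand_le_ub_head' y : integrand y <= ub_head' y.
Proof.
rewrite lerDl mulr_ge0 ?(mulr_ge0 (ltW c_gt0) (sqr_ge0 _)) //.
by rewrite subr_ge0; exact: expR_ge1Dx.
Qed.

Lemma cvg_decay_mul_hyper (P : R -> R) (B : R) :
  (forall h, 0 < h <= 1 -> `|P h| <= B) -> decay y * P (hyper y) @[y --> +oo] --> 0.
Proof.
move=> PB; apply: cvg_expRN_mul_bounded lam_gt0 _ => y y0.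
by apply: PB; rewrite hyper_gt0 ?hyper_le1.
Qed.

Definition ub_tail_coef := c / (2 * c + lam).
Definition ub_tail y := decay y * (ub_tail_coef * hyper y ^+ 2 - hyper y).
Definition ub_tail' y :=
  integrand y + 2 * ub_tail_coef * c * decay y * hyper y ^+ 2 * (1 - hyper y).

Lemma ub_tail_coef_gt0 : 0 < ub_tail_coef.
Proof. by rewrite divr_gt0 // addr_gt0 // mulr_gt0. Qed.

Lemma is_derive_ub_tail x : 0 <= x -> is_derive x 1 ub_tail (ub_tail' x).
Proof.
move=> x0; have dE := is_derive_decay x; have dG := is_derive_hyper _ x0.
rewrite /ub_tail; apply: is_derive_eq.
rewrite /GRing.scale /= /ub_tail' /integrand /ub_tail_coef.
by field; rewrite lt0r_neq0 // addr_gt0 // mulr_gt0.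
Qed.

Lemma derivable_ub_tail' x : 0 <= x -> derivable ub_tail' x 1.
Proof.
move=> x0; have dE := is_derive_decay x; have dG := is_derive_hyper _ x0.
by rewrite /ub_tail' /integrand; apply: ex_derive.
Qed.

Lemma integrand_le_ub_tail' y : 0 <= y -> integrand y <= ub_tail' y.
Proof.
move=> y0; rewrite lerDl mulr_ge0 ?subr_ge0 ?hyper_le1 //.
have := decay_gt0 y; have := ub_tail_coef_gt0; have := hyper_gt0 _ y0.
move=> *; apply: ltW; do ![assumption | apply: mulr_gt0 | apply: exprn_gt0 | done].
Qed.

Lemma cvg_ub_tail : ub_tail y @[y --> +oo] --> 0.
Proof.
apply: (@cvg_decay_mul_hyper (fun h => ub_tail_coef * h ^+ 2 - h) (ub_tail_coef + 1)).
move=> h /andP[h0 h1]; have := ub_tail_coef_gt0 => A0.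
have h2 : h ^+ 2 <= 1 by rewrite expr_le1 // ltW.
by rewrite ler_norml; apply/andP; split; nra.
Qed.

Lemma ub_value :
  ub_head lam^-1 - ub_head 0 - ub_tail lam^-1 = (c / lam)^-1 * ln (1 + c / lam)
    - ub_tail_coef * decay lam^-1 * hyper lam^-1 ^+ 2.
Proof.
rewrite /ub_head /ub_tail decay0 hyper0 mulr0 addr0 ln1 /hyper /ub_tail_coef.
by field; rewrite !lt0r_neq0 // ?addr_gt0 // ?mulr_gt0 // divr_gt0.
Qed.

Definition lb_head y :=
  - (decay y * hyper y) + c / lam * decay y * hyper y ^+ 2
  + (2 * (c / lam))^-1 * (- ((1 + 2 * (c / lam)) ^+ 2 / 2) * hyper y ^+ 2
      + 2 * (1 + 2 * (c / lam)) * hyper y + ln (1 + c * y)).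
Definition lb_head' y :=
  integrand y - 2 * (c / lam) * c * hyper y ^+ 3 * (decay y - (1 - lam * y / 2) ^+ 2).

Lemma is_derive_lb_head x : 0 <= x -> is_derive x 1 lb_head (lb_head' x).
Proof.
move=> x0; have dE := is_derive_decay x; have dG := is_derive_hyper _ x0.
have dL := is_derive_ln_den _ x0.
rewrite /lb_head; apply: is_derive_eq.
rewrite /GRing.scale /= /lb_head' /integrand /hyper.
by field; rewrite lt0r_neq0 ?hyper_den_gt0 // !lt0r_neq0.
Qed.

Lemma derivable_lb_head' x : 0 <= x -> derivable lb_head' x 1.
Proof.
move=> x0; have dE := is_derive_decay x; have dG := is_derive_hyper _ x0.
by rewrite /lb_head' /integrand; apply: ex_derive.
Qed.

Lemma lb_head'_le_integrand y : 0 <= y <= 2 / lam -> lb_head' y <= integrand y.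
Proof.
move=> /andP[y0 y2]; have G0 := hyper_gt0 _ y0.
have s0 : 0 < c / lam by rewrite divr_gt0.
rewrite lerBlDr lerDl mulr_ge0 //.
  by apply: ltW; do ![assumption | apply: mulr_gt0 | apply: exprn_gt0 | done].
have half0 : 0 <= 1 - lam * y / 2 by rewrite ler_pdivlMr // in y2; lra.
have halfE : decay y = expR (- (lam * y / 2)) ^+ 2.
  by rewrite /decay -expRM_natl; congr expR; field.
have := expR_ge1Dx (- (lam * y / 2)).
by rewrite subr_ge0 halfE; nra.
Qed.

Definition lb_tail_coef := 2 * (c / lam) * c / (3 * c + lam).
Definition lb_tail y :=
  decay y * (c / lam * hyper y ^+ 2 - hyper y - lb_tail_coef * hyper y ^+ 3).
Definition lb_tail' y :=
  integrand y - 3 * lb_tail_coef * c * decay y * hyper y ^+ 3 * (1 - hyper y).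

Lemma lb_tail_coef_gt0 : 0 < lb_tail_coef.
Proof. by do ![apply: divr_gt0 | apply: mulr_gt0 | apply: addr_gt0 | done]. Qed.

Lemma is_derive_lb_tail x : 0 <= x -> is_derive x 1 lb_tail (lb_tail' x).
Proof.
move=> x0; have dE := is_derive_decay x; have dG := is_derive_hyper _ x0.
rewrite /lb_tail; apply: is_derive_eq.
rewrite /GRing.scale /= /lb_tail' /integrand /lb_tail_coef.
by field; rewrite !lt0r_neq0 // addr_gt0 // mulr_gt0.
Qed.

Lemma derivable_lb_tail' x : 0 <= x -> derivable lb_tail' x 1.
Proof.
move=> x0; have dE := is_derive_decay x; have dG := is_derive_hyper _ x0.
by rewrite /lb_tail' /integrand; apply: ex_derive.
Qed.

Lemma lb_tail'_le_integrand y : 0 <= y -> lb_tail' y <= integrand y.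
Proof.
move=> y0; rewrite lerBlDr lerDl mulr_ge0 ?subr_ge0 ?hyper_le1 //.
have := decay_gt0 y; have := lb_tail_coef_gt0; have := hyper_gt0 _ y0.
move=> *; apply: ltW; do ![assumption | apply: mulr_gt0 | apply: exprn_gt0 | done].
Qed.

Lemma lb_tail'_ge0 y : 2 / lam <= y -> 0 <= lb_tail' y.
Proof.
move=> y2; have y0 : 0 <= y by apply: le_trans y2; rewrite divr_ge0 // ltW.
have G0 := hyper_gt0 _ y0; have E0 := decay_gt0 y; have A0 := lb_tail_coef_gt0.
have cG : 2 * (c * hyper y) <= lam.
  have cGy : c * hyper y * y = 1 - hyper y.
    by rewrite /hyper; field; exact: lt0r_neq0 (hyper_den_gt0 _ y0).
  have ly : 2 <= y * lam by rewrite -ler_pdivrMr.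
  have yp : 0 < y by apply: lt_le_trans y2; rewrite divr_gt0.
  have : 0 <= (lam - 2 * (c * hyper y)) * y by nra.
  by rewrite pmulr_lge0 // subr_ge0.
have -> : lb_tail' y = decay y * hyper y * (lam - 2 * (c * hyper y) ^+ 2 / lam)
    + decay y * hyper y ^+ 3 * (lam * lb_tail_coef + 3 * lb_tail_coef * c * hyper y).
  rewrite /lb_tail' /integrand /lb_tail_coef.
  by field; rewrite !lt0r_neq0 // addr_gt0 // mulr_gt0.
rewrite addr_ge0 // mulr_ge0 ?mulr_ge0 ?exprn_ge0 ?ltW //.
- have cG0 : 0 < c * hyper y by rewrite mulr_gt0.
  by rewrite subr_gt0 ltr_pdivrMr // -expr2; nra.
- by do ![assumption | apply: addr_gt0 | apply: mulr_gt0 | done].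
Qed.

Lemma cvg_lb_tail : lb_tail y @[y --> +oo] --> 0.
Proof.
apply: (@cvg_decay_mul_hyper
  (fun h => c / lam * h ^+ 2 - h - lb_tail_coef * h ^+ 3) (c / lam + 1 + lb_tail_coef)).
move=> h /andP[h0 h1]; have := lb_tail_coef_gt0 => A0.
have s0 : 0 < c / lam by rewrite divr_gt0.
have h2 : h ^+ 2 <= 1 by rewrite expr_le1 // ltW.
have h3 : h ^+ 3 <= 1 by rewrite expr_le1 // ltW.
have h2' : 0 <= h ^+ 2 by rewrite exprn_ge0 // ltW.
have h3' : 0 <= h ^+ 3 by rewrite exprn_ge0 // ltW.
by rewrite ler_norml; apply/andP; split; nra.
Qed.

Lemma lb_value :
  lb_head (2 / lam) - lb_head 0 - lb_tail (2 / lam)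
  = (2 * (c / lam))^-1 * ln (1 + 2 * (c / lam))
    + lb_tail_coef * decay (2 / lam) * hyper (2 / lam) ^+ 3.
Proof.
rewrite /lb_head /lb_tail decay0 hyper0 mulr0 addr0 ln1.
rewrite (_ : 1 + c * (2 / lam) = 1 + 2 * (c / lam)); last by ring.
rewrite /hyper /lb_tail_coef.
by field; rewrite !lt0r_neq0 // ?addr_gt0 // ?mulr_gt0 // divr_gt0.
Qed.

Lemma integral_head_le_ub :
  (\int[mu]_(x in `[0%R, lam^-1%R]) (integrand x)%:E <= (ub_head lam^-1 - ub_head 0)%:E)%E.
Proof.
have b0 : 0 < lam^-1 by rewrite invr_gt0.
rewrite -(integral_itv_cc_primitive b0 (ge0_in_itv_cc is_derive_ub_head));
  last exact/derivable_within_continuous/ge0_in_itv_cc/derivable_ub_head'.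
apply: le_integral_itv_cc.
- exact/derivable_within_continuous/ge0_in_itv_cc/derivable_integrand.
- exact/derivable_within_continuous/ge0_in_itv_cc/derivable_ub_head'.
- by move=> x _; exact: integrand_le_ub_head'.
Qed.

Lemma integral_tail_le_ub :
  (\int[mu]_(x in `[lam^-1%R, +oo[) (integrand x)%:E <= (- ub_tail lam^-1)%:E)%E.
Proof.
have b0 : 0 <= lam^-1 by rewrite invr_ge0 ltW.
have ub_tail'_ge0 x : 0 <= x -> 0 <= ub_tail' x.
  by move=> x0; apply: le_trans (integrand_le_ub_tail' _ x0); exact: integrand_ge0.
rewrite -sub0r -(integral_itv_cy_primitive (ge0_in_itv_cy b0 is_derive_ub_tail) _
  (ge0_in_itv_cy b0 ub_tail'_ge0) cvg_ub_tail);
  last exact/derivable_within_continuous/(ge0_in_itv_cy b0)/derivable_ub_tail'.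
apply: le_integral_itv_cy.
- exact/derivable_within_continuous/(ge0_in_itv_cy b0)/derivable_integrand.
- exact/derivable_within_continuous/(ge0_in_itv_cy b0)/derivable_ub_tail'.
- apply: (ge0_in_itv_cy b0) => x x0.
  by rewrite integrand_ge0 // integrand_le_ub_tail'.
Qed.

Lemma integral_head_ge_lb :
  ((lb_head (2 / lam) - lb_head 0)%:E <= \int[mu]_(x in `[0%R, (2 / lam)%R]) (integrand x)%:E)%E.
Proof.
have b0 : 0 < 2 / lam by rewrite divr_gt0.
rewrite -(integral_itv_cc_primitive b0 (ge0_in_itv_cc is_derive_lb_head));
  last exact/derivable_within_continuous/ge0_in_itv_cc/derivable_lb_head'.
apply: le_integral_itv_cc.
- exact/derivable_within_continuous/ge0_in_itv_cc/derivable_lb_head'.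
- exact/derivable_within_continuous/ge0_in_itv_cc/derivable_integrand.
- by move=> x x02; apply: lb_head'_le_integrand; rewrite in_itv /= in x02.
Qed.

Lemma integral_tail_ge_lb :
  ((- lb_tail (2 / lam))%:E <= \int[mu]_(x in `[(2 / lam)%R, +oo[) (integrand x)%:E)%E.
Proof.
have b0 : 0 <= 2 / lam by rewrite divr_ge0 // ltW.
have lb_tail'_ge0_in : {in `[2 / lam, +oo[, forall x, 0 <= lb_tail' x}.
  by move=> x; rewrite in_itv /= andbT; exact: lb_tail'_ge0.
rewrite -sub0r -(integral_itv_cy_primitive (ge0_in_itv_cy b0 is_derive_lb_tail) _
  lb_tail'_ge0_in cvg_lb_tail);
  last exact/derivable_within_continuous/(ge0_in_itv_cy b0)/derivable_lb_tail'.
apply: le_integral_itv_cy.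
- exact/derivable_within_continuous/(ge0_in_itv_cy b0)/derivable_lb_tail'.
- exact/derivable_within_continuous/(ge0_in_itv_cy b0)/derivable_integrand.
- move=> x x2; rewrite lb_tail'_ge0_in //.
  by rewrite lb_tail'_le_integrand // (le_trans b0) //; rewrite in_itv /= andbT in x2.
Qed.

Lemma integral_integrand_bounds :
  (2 * (c / lam))^-1 * ln (1 + 2 * (c / lam))
  < fine (\int[mu]_(x in `[0%R, +oo[) (integrand x)%:E)
  < (c / lam)^-1 * ln (1 + c / lam).
Proof.
have b0 : 0 <= lam^-1 by rewrite invr_ge0 ltW.
have b2 : 0 <= 2 / lam by rewrite divr_ge0 // ltW.
have cf := derivable_within_continuous (ge0_in_itv_cy (lexx 0) derivable_integrand).
have f0 := ge0_in_itv_cy (lexx 0) integrand_ge0.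
set I := (\int[mu]_(x in _) _)%E.
have I_lt : (I < ((c / lam)^-1 * ln (1 + c / lam))%:E)%E.
  rewrite /I (integral_itv_cy_split b0 cf f0).
  apply: le_lt_trans (leeD integral_head_le_ub integral_tail_le_ub) _.
  rewrite -EFinD lte_fin ub_value ltrBlDr ltrDl.
  have := decay_gt0 lam^-1; have := hyper_gt0 _ b0; have := ub_tail_coef_gt0.
  by move=> *; do ![assumption | apply: mulr_gt0 | apply: exprn_gt0].
have I_gt : (((2 * (c / lam))^-1 * ln (1 + 2 * (c / lam)))%:E < I)%E.
  rewrite /I (integral_itv_cy_split b2 cf f0).
  apply: lt_le_trans (leeD integral_head_ge_lb integral_tail_ge_lb).
  rewrite -EFinD lte_fin lb_value ltrDl.
  have := decay_gt0 (2 / lam); have := hyper_gt0 _ b2; have := lb_tail_coef_gt0.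
  by move=> *; do ![assumption | apply: mulr_gt0 | apply: exprn_gt0].
have I_fin : I \is a fin_num.
  rewrite ge0_fin_numE ?(lt_le_trans _ (ltW I_gt)) ?(lt_trans I_lt) ?ltry //.
  by apply: integral_ge0 => x /f0; rewrite lee_fin.
by rewrite -!lte_fin fineK // I_lt I_gt.
Qed.

End ExpHyperbola.

Lemma phi_integral {R : realType} (K : nat) (beta alpha pce delta sigma2 : R) :
  0 < beta -> phi K beta alpha pce delta sigma2 =
  fine (\int[lebesgue_measure]_(x in `[0%R, +oo[)
    (integrand beta^-1 (beta * alpha * pce * delta / (K%:R * sigma2)) x)%:E)%E.
Proof.
move=> beta0; rewrite /phi /Rintegral [in RHS]integral_mkcond; congr fine.
apply: eq_integral => x _; rewrite /patch; case: ifPn => [|x0].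
  rewrite inE /= in_itv /= andbT => x0.
  rewrite exponential_pdfE ?invr_gt0 //= /integrand /decay /hyper mulNr.
  by congr (_ * _ * _^-1)%:E; ring.
rewrite lt0_exponential_pdf ?mul0r // ltNge; apply: contra x0 => x0.
by apply: mem_set; rewrite /= in_itv /= andbT.
Qed.

Definition snr {R : realType} (K : nat) (beta alpha pce delta sigma2 : R) :=
  beta ^+ 2 * alpha * pce * delta / (K%:R * sigma2).

Lemma phi_bounds {R : realType} {K : nat} {beta alpha pce delta sigma2 : R} :
  (0 < K)%N -> 0 < beta -> 0 < alpha -> 0 < pce -> 0 < delta -> 0 < sigma2 ->
  let s := snr K beta alpha pce delta sigma2 in
  (2 * s)^-1 * ln (1 + 2 * s) < phi K beta alpha pce delta sigma2 < s^-1 * ln (1 + s).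
Proof.
move=> K0 beta0 alpha0 pce0 delta0 sigma0 /=.
have c0 : 0 < beta * alpha * pce * delta / (K%:R * sigma2).
  by rewrite divr_gt0 ?mulr_gt0 ?ltr0n.
have lam0 : 0 < beta^-1 by rewrite invr_gt0.
have := integral_integrand_bounds _ _ lam0 c0.
rewrite -phi_integral // (_ : _ / beta^-1 = snr K beta alpha pce delta sigma2) //.
by rewrite /snr invrK; ring.
Qed.

Theorem proposition1 (R : realType) (K M : nat)
  (p beta alpha pce delta sigma2 zeta : R) :
  (1 <= K)%N -> (2 <= M)%N ->
  0 < p -> 0 < beta -> 0 < alpha -> 0 < pce -> 0 < delta -> 0 < sigma2 ->
  0 < zeta -> zeta <= 1 ->
  p * beta * (zeta * (M%:R - 1) * L1 K beta alpha pce delta sigma2 + 1)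
    < P_Ik K M p beta alpha pce delta sigma2 zeta /\
  P_Ik K M p beta alpha pce delta sigma2 zeta
    < p * beta * (zeta * (M%:R - 1) * L2 K beta alpha pce delta sigma2 + 1).
Proof.
move=> K1 M2 p0 beta0 alpha0 pce0 delta0 sigma0 zeta0 _.
have /andP[phi_gt phi_lt] := phi_bounds K1 beta0 alpha0 pce0 delta0 sigma0.
set s := snr _ _ _ _ _ _ in phi_gt phi_lt.
have L1E : L1 K beta alpha pce delta sigma2 = 1 - s^-1 * ln (1 + s).
  by rewrite /L1 /s /snr invf_div.
have L2E : L2 K beta alpha pce delta sigma2 = 1 - (2 * s)^-1 * ln (1 + 2 * s).
  by rewrite /L2 /s /snr !mulrA invf_div.
have w0 : 0 < p * beta * (zeta * (M%:R - 1)).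
  by rewrite !mulr_gt0 // subr_gt0 ltr1n.
rewrite /P_Ik L1E L2E; split; nra.
Qed.
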